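(* For all $\Sigma\subseteq\mathsf{FOR}$ and $\varphi\in\mathsf{FOR}$: $\Sigma\vdash_{\mathcal{F}N}\varphi$ if and only if $\Sigma\vDash_{\mathsf{R}^n}\varphi$, where $\mathsf{R}^n$ is the set of Epstein relations $\mathfrak{R}$ such that for all $\varphi,\psi$, $\langle\neg\varphi,\psi\rangle\in\mathfrak{R}$ implies $\langle\varphi,\psi\rangle\in\mathfrak{R}$.
   Context: Language: propositional letters $\Phi=\{p_0,p_1,\dots\}$; connectives $\neg$, $\lor,\wedge,\to,\leftrightarrow,\vartriangle,\looparrowright$; $\mathsf{FOR}$ the set of all formulas. An Epstein model is $\langle v,\mathfrak{R}\rangle$ with $v:\Phi\to\{0,1\}$ and $\mathfrak{R}\subseteq\mathsf{FOR}^2$ (an Epstein relation); truth: letters via $v$, boolean connectives classical, $\langle v,\mathfrak{R}\rangle\vDash\varphi\vartriangle\psi$ iff both true and $\langle\varphi,\psi\rangle\in\mathfrak{R}$; $\langle v,\mathfrak{R}\rangle\vDash\varphi\looparrowright\psi$ iff $\varphi\to\psi$ true and $\langle\varphi,\psi\rangle\in\mathfrak{R}$. For a set $\mathsf{R}$ of relations, $\Sigma\vDash_{\mathsf{R}}\varphi$ iff for every $\mathfrak{R}\in\mathsf{R}$ and every valuation $v$, if $\langle v,\mathfrak{R}\rangle$ satisfies all of $\Sigma$ then it satisfies $\varphi$. $\mathcal{F}$ is the least set containing all classical tautologies of the language and the axioms $(p\looparrowright q)\to(p\to q)$ and $(p\vartriangle q)\leftrightarrow((p\looparrowright q)\wedge(p\wedge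 q))$, closed under uniform substitution and modus ponens. $\mathcal{F}N$ is the least set containing $\mathcal{F}$ and the axioms $(n1)\ (\neg p\looparrowright q)\to((p\looparrowright q)\lor\neg(p\to q))$ and $(n2)\ ((\neg\neg p\looparrowright q)\wedge\neg(\neg p\to q))\to(p\looparrowright q)$ ($p,q$ distinct letters), closed under uniform substitution and modus ponens. $\Sigma\vdash_{\mathcal{F}N}\varphi$ iff there is a finite sequence ending in $\varphi$ each member of which is in $\mathcal{F}N\cup\Sigma$ or follows from two earlier members by modus ponens. *)

From Stdlib Require Import List Arith.
Import ListNotations.

Inductive form : Type :=
| Var  : nat -> form
| Neg  : form -> form
| Or   : form -> form -> form
| And  : form -> form -> form
| Imp  : form -> form -> form
| Iff  : form -> form -> form
| Tri  : form -> form -> form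
| Loop : form -> form -> form.

Definition erel := form -> form -> Prop.

Fixpoint sat (v : nat -> bool) (R : erel) (f : form) : Prop :=
  match f with
  | Var n => v n = true
  | Neg a => ~ sat v R a
  | Or a b => sat v R a \/ sat v R b
  | And a b => sat v R a /\ sat v R b
  | Imp a b => sat v R a -> sat v R b
  | Iff a b => (sat v R a <-> sat v R b)
  | Tri a b => sat v R a /\ sat v R b /\ R a b
  | Loop a b => (sat v R a -> sat v R b) /\ R a b
  end.

Definition sem_cons (RR : erel -> Prop) (Sigma : form -> Prop) (phi : form) : Prop :=
  forall (R : erel) (v : nat -> bool),
    RR R -> (forall s, Sigma s -> sat v R s) -> sat v R phi.

Definition Rn (R : erel) : Prop := forall a b, R (Neg a) b -> R a b.

Fixpoint ceval (w : form -> bool) (f : form) : bool :=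
  match f with
  | Var _ => w f
  | Neg a => negb (ceval w a)
  | Or a b => ceval w a || ceval w b
  | And a b => ceval w a && ceval w b
  | Imp a b => implb (ceval w a) (ceval w b)
  | Iff a b => Bool.eqb (ceval w a) (ceval w b)
  | Tri _ _ => w f
  | Loop _ _ => w f
  end.

Definition tautology (f : form) : Prop := forall w, ceval w f = true.

Fixpoint subst (s : nat -> form) (f : form) : form :=
  match f with
  | Var n => s n
  | Neg a => Neg (subst s a)
  | Or a b => Or (subst s a) (subst s b)
  | And a b => And (subst s a) (subst s b)
  | Imp a b => Imp (subst s a) (subst s b)
  | Iff a b => Iff (subst s a) (subst s b)
  | Tri a b => Tri (subst s a) (subst s b)
  | Loop a b => Loop (subst s a) (subst s b)
  end.

Definition p := Var 0.
Definition q := Var 1.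

Definition axF1 := Imp (Loop p q) (Imp p q).
Definition axF2 := Iff (Tri p q) (And (Loop p q) (And p q)).
Definition axN1 := Imp (Loop (Neg p) q) (Or (Loop p q) (Neg (Imp p q))).
Definition axN2 := Imp (And (Loop (Neg (Neg p)) q) (Neg (Imp (Neg p) q))) (Loop p q).

Inductive FN : form -> Prop :=
| FN_taut : forall f, tautology f -> FN f
| FN_F1 : FN axF1
| FN_F2 : FN axF2
| FN_N1 : FN axN1
| FN_N2 : FN axN2
| FN_subst : forall s f, FN f -> FN (subst s f)
| FN_mp : forall f g, FN (Imp f g) -> FN f -> FN g.

Definition derives (Sigma : form -> Prop) (phi : form) : Prop :=
  exists l : list form,
    l <> [] /\ last l (Var 0) = phi /\
    forall i, i < length l ->
      FN (nth i l (Var 0)) \/ Sigma (nth i l (Var 0)) \/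
      exists j k, j < i /\ k < i /\
        nth j l (Var 0) = Imp (nth k l (Var 0)) (nth i l (Var 0)).

(* Soundness: the tautologies and the axioms F1, F2 hold in every Epstein model
   (classical logic with relatedness atoms), n1 and n2 hold as soon as the relation
   satisfies R(~a, b) -> R(a, b), and uniform substitution preserves validity because
   a substituted model is again an Epstein model of R^n.

   Completeness, by contraposition: if Sigma does not derive phi, extend Sigma along an
   enumeration of formulas to a maximal set Gamma that still does not derive phi.
   Derivability from Gamma is then a classical valuation w that makes every theorem of
   FN true.  Reading off the letters from w, and letting a be related to b when w makes
   a ↬ b true (or a is true, b false and w makes ~a ↬ b true), gives an Epstein model of
   R^n whose truth coincides with w, so it satisfies Sigma and refutes phi. *)

From Stdlib Require Import List Arith Lia Bool Classical ClassicalEpsilon Cantor.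
Import ListNotations.

Definition bool_of (P : Prop) : bool :=
  if excluded_middle_informative P then true else false.

Lemma bool_of_true (P : Prop) : bool_of P = true <-> P.
Proof.
  unfold bool_of; destruct (excluded_middle_informative P); split; auto; discriminate.
Qed.

(** * Soundness *)

Lemma sat_ceval v R f :
  sat v R f <-> ceval (fun g => bool_of (sat v R g)) f = true.
Proof.
  induction f; simpl; rewrite ?bool_of_true, ?IHf, ?IHf1, ?IHf2, ?orb_true_iff, ?andb_true_iff;
    try tauto;
    repeat match goal with |- context [ceval ?w ?g] => destruct (ceval w g) end;
    simpl; intuition congruence.
Qed.

Lemma sat_subst v R s f :
  sat v R (subst s f) <->
  sat (fun n => bool_of (sat v R (s n))) (fun a b => R (subst s a) (subst s b)) f.
Proof.
  induction f; simpl; rewrite ?bool_of_true, ?IHf, ?IHf1, ?IHf2; tauto.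
Qed.

Lemma Rn_subst R s : Rn R -> Rn (fun a b => R (subst s a) (subst s b)).
Proof. intros HR a b; apply (HR (subst s a)). Qed.

Lemma FN_sound f : FN f -> forall v R, Rn R -> sat v R f.
Proof.
  induction 1 as [f Hf| | | | |s f _ IH|f g _ IHfg _ IHf]; intros v R HR.
  - apply sat_ceval, Hf.
  - unfold axF1; simpl; tauto.
  - unfold axF2; simpl; tauto.
  - unfold axN1; simpl; intros [_ HR'].
    destruct (classic (sat v R p -> sat v R q)) as [Hpq|Hpq]; [left | tauto].
    exact (conj Hpq (HR _ _ HR')).
  - unfold axN2; simpl; intros [[_ HR'] Hnot].
    split; [tauto | exact (HR _ _ (HR _ _ HR'))].
  - apply sat_subst, IH, Rn_subst, HR.
  - exact (IHfg v R HR (IHf v R HR)).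
Qed.

Inductive derivable (S : form -> Prop) : form -> Prop :=
| derivable_FN : forall f, FN f -> derivable S f
| derivable_hyp : forall f, S f -> derivable S f
| derivable_mp : forall f g, derivable S (Imp f g) -> derivable S f -> derivable S g.

Lemma derivable_sound S f : derivable S f -> sem_cons Rn S f.
Proof.
  induction 1 as [f Hf|f Hf|f g _ IHfg _ IHf]; intros R v HR HS.
  - exact (FN_sound f Hf v R HR).
  - exact (HS f Hf).
  - exact (IHfg R v HR HS (IHf R v HR HS)).
Qed.

Definition justified (S : form -> Prop) (l : list form) (i : nat) : Prop :=
  FN (nth i l (Var 0)) \/ S (nth i l (Var 0)) \/
  exists j k, j < i /\ k < i /\
    nth j l (Var 0) = Imp (nth k l (Var 0)) (nth i l (Var 0)).

Definition is_derivation (S : form -> Prop) (l : list form) : Prop :=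
  forall i, i < length l -> justified S l i.

Lemma last_nth (l : list form) d : l <> [] -> last l d = nth (length l - 1) l d.
Proof.
  intros Hl; rewrite (app_removelast_last d Hl) at 2 3.
  rewrite length_app, app_nth2; simpl; [|lia].
  now replace (length (removelast l) + 1 - 1 - length (removelast l)) with 0 by lia.
Qed.

Lemma justified_app_l S l l' i : i < length l -> justified S l i -> justified S (l ++ l') i.
Proof.
  intros Hi [H|[H|(j & k & Hj & Hk & E)]]; unfold justified; rewrite (app_nth1 _ _ _ Hi).
  - now left.
  - now right; left.
  - right; right; exists j, k; rewrite !app_nth1 by lia; auto.
Qed.

Lemma justified_app_r S l l' i : justified S l' i -> justified S (l ++ l') (length l + i).
Proof.
  intros [H|[H|(j & k & Hj & Hk & E)]]; unfold justified; rewrite app_nth2_plus.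
  - now left.
  - now right; left.
  - right; right; exists (length l + j), (length l + k).
    rewrite !app_nth2_plus; repeat split; [lia | lia | exact E].
Qed.

Lemma is_derivation_app S l l' :
  is_derivation S l -> is_derivation S l' -> is_derivation S (l ++ l').
Proof.
  intros H H' i Hi; rewrite length_app in Hi.
  destruct (Nat.lt_ge_cases i (length l)) as [Hl|Hl].
  - exact (justified_app_l _ _ _ _ Hl (H i Hl)).
  - replace i with (length l + (i - length l)) by lia.
    apply justified_app_r, H'; lia.
Qed.

Lemma is_derivation_mp S l g j k :
  is_derivation S l -> j < length l -> k < length l ->
  nth j l (Var 0) = Imp (nth k l (Var 0)) g -> is_derivation S (l ++ [g]).
Proof.
  intros H Hj Hk E i Hi; rewrite length_app in Hi; simpl in Hi.
  destruct (Nat.lt_ge_cases i (length l)) as [Hl|Hl].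
  - exact (justified_app_l _ _ _ _ Hl (H i Hl)).
  - replace i with (length l + 0) by lia.
    right; right; exists j, k; rewrite !app_nth1, app_nth2_plus by lia.
    repeat split; [lia | lia | exact E].
Qed.

Lemma derives_derivable S phi : derives S phi -> derivable S phi.
Proof.
  intros (l & Hne & Hlast & Hl).
  assert (Hall : forall i, i < length l -> derivable S (nth i l (Var 0))).
  { intros i; induction i as [i IH] using (well_founded_induction lt_wf); intros Hi.
    destruct (Hl i Hi) as [H|[H|(j & k & Hj & Hk & E)]].
    - now apply derivable_FN.
    - now apply derivable_hyp.
    - apply (derivable_mp _ (nth k l (Var 0))); [rewrite <- E|]; apply IH; lia. }
  rewrite <- Hlast, last_nth by exact Hne.
  apply Hall; destruct l; [congruence | simpl; lia].
Qed.

Lemma derivable_derives S phi : derivable S phi -> derives S phi.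
Proof.
  induction 1 as [f Hf|f Hf|f g _ (l1 & Hn1 & Hl1 & H1) _ (l2 & Hn2 & Hl2 & H2)].
  1, 2: exists [f]; split; [congruence | split; [reflexivity|]];
        intros i Hi; simpl in Hi; replace i with 0 by lia; simpl; auto.
  assert (L1 : 0 < length l1) by (destruct l1; [congruence | simpl; lia]).
  assert (L2 : 0 < length l2) by (destruct l2; [congruence | simpl; lia]).
  exists ((l1 ++ l2) ++ [g]); split; [destruct l1; simpl; congruence | split].
  - apply last_last.
  - apply (is_derivation_mp _ _ _ (length l1 - 1) (length l1 + length l2 - 1));
      rewrite ?length_app; try lia.
    + now apply is_derivation_app.
    + rewrite app_nth1, app_nth2 by lia.
      replace (length l1 + length l2 - 1 - length l1) with (length l2 - 1) by lia.
      rewrite <- !last_nth by assumption; congruence.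
Qed.

Lemma derivable_taut S f : tautology f -> derivable S f.
Proof. intros; apply derivable_FN, FN_taut; assumption. Qed.

Lemma derivable_mp2 S a b c :
  tautology (Imp a (Imp b c)) -> derivable S a -> derivable S b -> derivable S c.
Proof.
  intros T Ha Hb; apply (derivable_mp _ b); [apply (derivable_mp _ a)|]; auto.
  now apply derivable_taut.
Qed.

Lemma derivable_mono (S S' : form -> Prop) f :
  (forall x, S x -> S' x) -> derivable S f -> derivable S' f.
Proof.
  intros H; induction 1; [apply derivable_FN | apply derivable_hyp | eapply derivable_mp]; eauto.
Qed.

Definition add_hyp (G : form -> Prop) (e : form) : form -> Prop :=
  fun y => G y \/ y = e.

Lemma derivable_deduction S a f : derivable (add_hyp S a) f -> derivable S (Imp a f).
Proof.
  induction 1 as [f Hf|f Hf|f g _ IHfg _ IHf].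
  - apply (derivable_mp2 _ f f); [| apply derivable_FN ..]; auto.
    intro w; simpl; destruct (ceval w f), (ceval w a); reflexivity.
  - destruct Hf as [Hf | ->].
    + apply (derivable_mp2 _ f f); [| apply derivable_hyp ..]; auto.
      intro w; simpl; destruct (ceval w f), (ceval w a); reflexivity.
    + apply derivable_taut; intro w; simpl; destruct (ceval w a); reflexivity.
  - refine (derivable_mp2 _ _ _ _ _ IHfg IHf).
    intro w; simpl; destruct (ceval w f), (ceval w a), (ceval w g); reflexivity.
Qed.

Lemma derivable_chain (C : nat -> form -> Prop) f :
  (forall n m, n <= m -> forall x, C n x -> C m x) ->
  derivable (fun x => exists n, C n x) f -> exists n, derivable (C n) f.
Proof.
  intros Hmono; induction 1 as [f Hf|f [n Hf]|f g _ [n1 H1] _ [n2 H2]].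
  - exists 0; now apply derivable_FN.
  - exists n; now apply derivable_hyp.
  - exists (max n1 n2); apply (derivable_mp _ f).
    + apply (derivable_mono (C n1)); [apply Hmono; lia | exact H1].
    + apply (derivable_mono (C n2)); [apply Hmono; lia | exact H2].
Qed.

(** * Lindenbaum's lemma *)

Definition pair_code (a b : nat) : nat := to_nat (a, b).

Lemma pair_code_inj a b c d : pair_code a b = pair_code c d -> a = c /\ b = d.
Proof.
  unfold pair_code; intros H; apply (f_equal of_nat) in H.
  rewrite !cancel_of_to in H; now injection H.
Qed.

Fixpoint form_code (f : form) : nat :=
  match f with
  | Var n => pair_code 0 n
  | Neg a => pair_code 1 (form_code a)
  | Or a b => pair_code 2 (pair_code (form_code a) (form_code b))
  | And a b => pair_code 3 (pair_code (form_code a) (form_code b))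
  | Imp a b => pair_code 4 (pair_code (form_code a) (form_code b))
  | Iff a b => pair_code 5 (pair_code (form_code a) (form_code b))
  | Tri a b => pair_code 6 (pair_code (form_code a) (form_code b))
  | Loop a b => pair_code 7 (pair_code (form_code a) (form_code b))
  end.

Lemma form_code_inj f g : form_code f = form_code g -> f = g.
Proof.
  revert g; induction f; destruct g; cbn [form_code]; intros H;
    apply pair_code_inj in H; destruct H as [Htag H]; try discriminate;
    try (apply pair_code_inj in H; destruct H);
    f_equal; auto.
Qed.

Definition form_of_code (n : nat) : form :=
  epsilon (inhabits (Var 0)) (fun f => form_code f = n).

Lemma form_of_codeK f : form_of_code (form_code f) = f.
Proof.
  apply form_code_inj.
  exact (epsilon_spec _ (fun g => form_code g = form_code f) (ex_intro _ f eq_refl)).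
Qed.

Section Lindenbaum.
Variables (Sigma : form -> Prop) (phi : form).

Definition extend (G : form -> Prop) (e : form) : form -> Prop :=
  if excluded_middle_informative (derivable (add_hyp G e) phi)
  then add_hyp G (Neg e) else add_hyp G e.

Lemma extend_incl G e x : G x -> extend G e x.
Proof. unfold extend, add_hyp; destruct excluded_middle_informative; auto. Qed.

Lemma extend_decides G e : extend G e e \/ extend G e (Neg e).
Proof. unfold extend, add_hyp; destruct excluded_middle_informative; auto. Qed.

Lemma extend_underivable G e : ~ derivable G phi -> ~ derivable (extend G e) phi.
Proof.
  unfold extend; destruct excluded_middle_informative as [Hpos|Hnot]; [|intros _; exact Hnot].
  intros HG Hneg; apply HG.
  refine (derivable_mp2 _ _ _ _ _ (derivable_deduction _ _ _ Hpos)
                                  (derivable_deduction _ _ _ Hneg)).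
  intro w; simpl; destruct (ceval w e), (ceval w phi); reflexivity.
Qed.

Fixpoint stage (n : nat) : form -> Prop :=
  match n with
  | 0 => Sigma
  | S n => extend (stage n) (form_of_code n)
  end.

Definition lindenbaum : form -> Prop := fun x => exists n, stage n x.

Lemma stage_mono n m : n <= m -> forall x, stage n x -> stage m x.
Proof. induction 1; simpl; auto using extend_incl. Qed.

Lemma lindenbaum_underivable : ~ derivable Sigma phi -> ~ derivable lindenbaum phi.
Proof.
  intros HS H; destruct (derivable_chain stage phi stage_mono H) as [n Hn].
  revert Hn; induction n as [|n IH]; [exact HS | exact (extend_underivable _ _ IH)].
Qed.

Lemma lindenbaum_complete f : lindenbaum f \/ lindenbaum (Neg f).
Proof.
  destruct (extend_decides (stage (form_code f)) f) as [H|H];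
    [left | right]; exists (S (form_code f)); simpl; now rewrite form_of_codeK.
Qed.

End Lindenbaum.

Definition signed (w : form -> bool) (f : form) : form := if ceval w f then f else Neg f.

Lemma ceval_signed w w' f : ceval w' (signed w f) = true <-> ceval w' f = ceval w f.
Proof.
  unfold signed; destruct (ceval w f); simpl; destruct (ceval w' f); simpl; intuition congruence.
Qed.

Lemma signed_unary_taut w a (op : form -> form) (bop : bool -> bool) :
  (forall w' x, ceval w' (op x) = bop (ceval w' x)) ->
  tautology (Imp (signed w a) (signed w (op a))).
Proof.
  intros Hop w'; simpl; destruct (ceval w' (signed w a)) eqn:Ea; [simpl | reflexivity].
  apply ceval_signed in Ea; apply ceval_signed; rewrite !Hop, Ea; reflexivity.
Qed.

Lemma signed_binary_taut w a b (op : form -> form -> form) (bop : bool -> bool -> bool) :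
  (forall w' x y, ceval w' (op x y) = bop (ceval w' x) (ceval w' y)) ->
  tautology (Imp (signed w a) (Imp (signed w b) (signed w (op a b)))).
Proof.
  intros Hop w'; simpl; destruct (ceval w' (signed w a)) eqn:Ea; [simpl | reflexivity].
  destruct (ceval w' (signed w b)) eqn:Eb; [simpl | reflexivity].
  apply ceval_signed in Ea, Eb; apply ceval_signed; rewrite !Hop, Ea, Eb; reflexivity.
Qed.

Section MaximalSet.
Variables (G : form -> Prop) (phi : form).
Hypothesis G_underivable : ~ derivable G phi.
Hypothesis G_complete : forall f, derivable G f \/ derivable G (Neg f).

Let w : form -> bool := fun g => bool_of (derivable G g).

Lemma derivable_signed f : derivable G (signed w f).
Proof.
  assert (Hatom : forall f, ceval w f = w f -> derivable G (signed w f)).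
  { intros g E; unfold signed; rewrite E; unfold w.
    destruct (bool_of (derivable G g)) eqn:B; [now apply bool_of_true|].
    destruct (G_complete g) as [H|H]; [|exact H].
    apply bool_of_true in H; congruence. }
  induction f as [n|a IH|a IHa b IHb|a IHa b IHb|a IHa b IHb|a IHa b IHb|a b|a b].
  1, 7, 8: apply Hatom; reflexivity.
  - exact (derivable_mp _ _ _ (derivable_taut _ _ (signed_unary_taut w a Neg negb
             (fun _ _ => eq_refl))) IH).
  - exact (derivable_mp2 _ _ _ _ (signed_binary_taut w a b Or orb (fun _ _ _ => eq_refl)) IHa IHb).
  - exact (derivable_mp2 _ _ _ _ (signed_binary_taut w a b And andb (fun _ _ _ => eq_refl)) IHa IHb).
  - exact (derivable_mp2 _ _ _ _ (signed_binary_taut w a b Imp implb (fun _ _ _ => eq_refl)) IHa IHb).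
  - exact (derivable_mp2 _ _ _ _ (signed_binary_taut w a b Iff eqb (fun _ _ _ => eq_refl)) IHa IHb).
Qed.

Lemma ceval_derivable f : ceval (fun g => bool_of (derivable G g)) f = true <-> derivable G f.
Proof.
  fold w; pose proof (derivable_signed f) as Hs; unfold signed in Hs.
  split; intros Hf; [now rewrite Hf in Hs|].
  destruct (ceval w f) eqn:E; [reflexivity|].
  exfalso; apply G_underivable.
  refine (derivable_mp2 _ _ _ _ _ Hf Hs).
  intro w'; simpl; destruct (ceval w' f), (ceval w' phi); reflexivity.
Qed.

End MaximalSet.

(** * The canonical model of a maximal set *)

Definition inst2 (a b : form) (n : nat) : form :=
  match n with 0 => a | 1 => b | _ => Var n end.

Section CanonicalModel.
Variable w : form -> bool.
Hypothesis w_FN : forall f, FN f -> ceval w f = true.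

Definition canon_val (n : nat) : bool := w (Var n).

(* The second disjunct never changes the truth of [a ↬ b] (there [a -> b] is false);
   it is what makes the relation closed under [R (Neg a) b -> R a b], by axiom n1. *)
Definition canon_rel (a b : form) : Prop :=
  w (Loop a b) = true \/
  (ceval w a = true /\ ceval w b = false /\ w (Loop (Neg a) b) = true).

Lemma w_instance f a b : FN f -> ceval w (subst (inst2 a b) f) = true.
Proof. intros; apply w_FN, FN_subst; assumption. Qed.

Lemma sat_canon f : sat canon_val canon_rel f <-> ceval w f = true.
Proof.
  induction f as [n|a IH|a IHa b IHb|a IHa b IHb|a IHa b IHb|a IHa b IHb|a IHa b IHb|a IHa b IHb];
    cbn [sat ceval]; rewrite ?IH, ?IHa, ?IHb, ?orb_true_iff, ?andb_true_iff; try tauto.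
  - destruct (ceval w a); simpl; intuition congruence.
  - destruct (ceval w a), (ceval w b); simpl; intuition congruence.
  - destruct (ceval w a), (ceval w b); simpl; intuition congruence.
  - pose proof (w_instance _ a b FN_F2) as F2; simpl in F2; unfold canon_rel.
    destruct (ceval w a), (ceval w b), (w (Tri a b)), (w (Loop a b));
      simpl in *; intuition congruence.
  - pose proof (w_instance _ a b FN_F1) as F1; simpl in F1; unfold canon_rel.
    destruct (ceval w a), (ceval w b), (w (Loop a b)); simpl in *; intuition congruence.
Qed.

Lemma Rn_canon_rel : Rn canon_rel.
Proof.
  intros a b H.
  pose proof (w_instance _ a b FN_N1) as N1; pose proof (w_instance _ a b FN_N2) as N2.
  simpl in N1, N2; unfold canon_rel in *; simpl in H.
  destruct (ceval w a), (ceval w b), (w (Loop a b)), (w (Loop (Neg a) b)),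
    (w (Loop (Neg (Neg a)) b)); simpl in *; intuition congruence.
Qed.

End CanonicalModel.

Theorem mainTheorem17 :
  forall (Sigma : form -> Prop) (phi : form),
    derives Sigma phi <-> sem_cons Rn Sigma phi.
Proof.
  intros Sigma phi; split.
  - intros H; exact (derivable_sound _ _ (derives_derivable _ _ H)).
  - intros Hsem; apply derivable_derives, NNPP; intros Hnot.
    set (G := lindenbaum Sigma phi).
    assert (G_underivable : ~ derivable G phi) by exact (lindenbaum_underivable _ _ Hnot).
    assert (G_complete : forall f, derivable G f \/ derivable G (Neg f)).
    { intros f; destruct (lindenbaum_complete Sigma phi f);
        [left | right]; now apply derivable_hyp. }
    pose (w := fun g => bool_of (derivable G g)).
    assert (w_derivable : forall f, ceval w f = true <-> derivable G f)
      by exact (ceval_derivable G phi G_underivable G_complete).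
    assert (w_FN : forall f, FN f -> ceval w f = true)
      by (intros f Hf; apply w_derivable, derivable_FN, Hf).
    apply G_underivable, w_derivable, (sat_canon w w_FN).
    apply Hsem; [exact (Rn_canon_rel w w_FN) |].
    intros s Hs; apply (sat_canon w w_FN), w_derivable, derivable_hyp.
    now exists 0.
Qed.
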